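(* Let $\mathcal A$ be a Banach algebra and let $X$ be a left Banach $\mathcal A$-submodule of $\mathcal A^*$. Let $f\in B_{\mathcal A}(\mathcal A,X^* )^*$. Then $f\in Q_X$ if and only if there are sequences $(a_i)\subseteq\mathcal A$ and $(f_i)\subseteq X$ with $\sum_{i=1}^\infty\|a_i\|\|f_i\|<\infty$ such that $f=\sum_{i=1}^\infty a_if_i$. Moreover, for $f\in Q_X$, $$\|f\|_M=\inf\Big\{\sum_{i=1}^\infty\|a_i\|\|f_i\| : f=\sum_{i=1}^\infty a_if_i,\ \sum_{i=1}^\infty\|a_i\|\|f_i\|<\infty\Big\},$$ where $\|f\|_M$ is the norm of $f$ as a functional on $B_{\mathcal A}(\mathcal A,X^* )$.
   Context: $\mathcal A^*$ is a left Banach $\mathcal A$-module via $\langle a\cdot f,b\rangle=\langle f,ba\rangle$; $X$ is a closed subspace of $\mathcal A^*$ invariant under this action. $X^*$ is a right Banach $\mathcal A$-module via $\langle m\cdot a,f\rangle=\langle m,a\cdot f\rangle$. $B_{\mathcal A}(\mathcal A,X^* )$ is the Banach space of bounded linear maps $T:\mathcal A\to X^*$ with $T(ab)=T(a)\cdot b$, with the operator norm $\|\cdot\|_M$. For $a\in\mathcal A$, $f\in X$, $af\in B_{\mathcal A}(\mathcal A,X^* )^*$ is given by $\langle af,T\rangle=\langle f,T(a)\rangle$. $Q_X$ is the norm closure in $B_{\mathcal A}(\mathcal A,X^* )^*$ of the span of $\{af:a\in\mathcal A,f\in X\}$. *)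

(* Complex scalars are R[i] (complex R
   from mathcomp-real-closed) for R : realType; all norms are taken real-valued
   via Re `|.|  (for z : R[i], `|z| = (Re `|z|)%:C). *)
From mathcomp Require Import all_boot all_order all_algebra.
From mathcomp Require Import all_classical all_reals all_analysis.
From mathcomp Require Import complex.
Set Implicit Arguments. Unset Strict Implicit. Unset Printing Implicit Defensive.
Import Order.TTheory GRing.Theory Num.Theory.
Import numFieldNormedType.Exports.
Local Open Scope classical_set_scope.
Local Open Scope ring_scope.
Local Open Scope complex_scope.

Section BanachModuleDefs.
Variable R : realType.
Variable A : completeNormedModType R[i].
Variable mul : A -> A -> A.

Definition nrmC (z : R[i]) : R := complex.Re `|z|.
Definition nrmA (a : A) : R := complex.Re `|a|.

Definition banach_algebra_mul : Prop :=
  [/\ (forall (k : R[i]) a b c, mul (k *: a + b) c = k *: mul a c + mul b c),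
      (forall (k : R[i]) a b c, mul a (k *: b + c) = k *: mul a b + mul a c),
      (forall a b c, mul (mul a b) c = mul a (mul b c)) &
      (forall a b, nrmA (mul a b) <= nrmA a * nrmA b)].

Definition in_dualA (phi : A -> R[i]) : Prop :=
  (forall (k : R[i]) a b, phi (k *: a + b) = k * phi a + phi b) /\
  exists c : R, forall a, nrmC (phi a) <= c * nrmA a.

Definition dnorm (phi : A -> R[i]) : R :=
  sup [set nrmC (phi a) | a in [set a | nrmA a <= 1]].

Definition actL (a : A) (phi : A -> R[i]) : A -> R[i] := fun b => phi (mul b a).

Definition closed_left_submodule (X : set (A -> R[i])) : Prop :=
  [/\ (forall phi, X phi -> in_dualA phi),
      X (fun _ => 0),
      (forall (k : R[i]) phi psi, X phi -> X psi -> X (fun b => k * phi b + psi b)),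
      (forall phi, in_dualA phi ->
         (forall eps : R, 0 < eps -> exists2 psi, X psi & dnorm (fun b => phi b - psi b) <= eps) ->
         X phi) &
      (forall a phi, X phi -> X (actL a phi))].

Variable X : set (A -> R[i]).

(* X^* : bounded linear functionals on X (only their values on X matter) *)
Definition in_dualX (m : (A -> R[i]) -> R[i]) : Prop :=
  (forall (k : R[i]) phi psi, X phi -> X psi ->
     m (fun b => k * phi b + psi b) = k * m phi + m psi) /\
  exists c : R, forall phi, X phi -> nrmC (m phi) <= c * dnorm phi.

Definition xnorm (m : (A -> R[i]) -> R[i]) : R :=
  sup [set nrmC (m phi) | phi in [set phi | X phi /\ dnorm phi <= 1]].

(* B_A(A, X^* ) : bounded linear right module maps T : A -> X^*,
   T (a b) = T(a).b  where <m.b, f> = <m, b.f> *)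
Definition in_BA (T : A -> (A -> R[i]) -> R[i]) : Prop :=
  [/\ (forall a, in_dualX (T a)),
      (forall (k : R[i]) a b phi, X phi -> T (k *: a + b) phi = k * T a phi + T b phi),
      (exists c : R, forall a, xnorm (T a) <= c * nrmA a) &
      (forall a b phi, X phi -> T (mul a b) phi = T a (actL b phi))].

Definition Mnorm (T : A -> (A -> R[i]) -> R[i]) : R :=
  sup [set xnorm (T a) | a in [set a | nrmA a <= 1]].

Definition in_dualBA (F : (A -> (A -> R[i]) -> R[i]) -> R[i]) : Prop :=
  (forall (k : R[i]) T S, in_BA T -> in_BA S ->
     F (fun a phi => k * T a phi + S a phi) = k * F T + F S) /\
  exists c : R, forall T, in_BA T -> nrmC (F T) <= c * Mnorm T.

Definition dMnorm (F : (A -> (A -> R[i]) -> R[i]) -> R[i]) : R :=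
  sup [set nrmC (F T) | T in [set T | in_BA T /\ Mnorm T <= 1]].

(* the element a f of B_A(A, X^* )^* : <a f, T> = <f, T(a)> = T a f *)
Definition elem (a : A) (phi : A -> R[i]) : (A -> (A -> R[i]) -> R[i]) -> R[i] :=
  fun T => T a phi.

(* the linear span of { a f : a in A, f in X } (scalars absorbed in a) *)
Definition in_span (F : (A -> (A -> R[i]) -> R[i]) -> R[i]) : Prop :=
  exists (n : nat) (a : 'I_n -> A) (phi : 'I_n -> A -> R[i]),
    (forall i, X (phi i)) /\
    F = fun T => \sum_(i < n) elem (a i) (phi i) T.

Definition in_QX (F : (A -> (A -> R[i]) -> R[i]) -> R[i]) : Prop :=
  in_dualBA F /\
  forall eps : R, 0 < eps ->
    exists2 G, in_span G & dMnorm (fun T => F T - G T) <= eps.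

Definition is_rep (F : (A -> (A -> R[i]) -> R[i]) -> R[i])
    (a : nat -> A) (phi : nat -> A -> R[i]) : Prop :=
  [/\ (forall i, X (phi i)),
      cvgn (series (fun i => nrmA (a i) * dnorm (phi i))) &
      (fun n => dMnorm (fun T => F T - \sum_(0 <= i < n) elem (a i) (phi i) T))
        @ \oo --> (0 : R)].

Definition rep_cost (a : nat -> A) (phi : nat -> A -> R[i]) : R :=
  limn (series (fun i => nrmA (a i) * dnorm (phi i))).

End BanachModuleDefs.

From mathcomp Require Import all_boot all_order all_algebra.
From mathcomp Require Import all_classical all_reals all_analysis.
From mathcomp Require Import complex.
From mathcomp Require Import ring lra.
Set Implicit Arguments. Unset Strict Implicit. Unset Printing Implicit Defensive.
Import Order.TTheory GRing.Theory Num.Theory.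
Import numFieldNormedType.Exports.
Local Open Scope classical_set_scope.
Local Open Scope ring_scope.
Local Open Scope complex_scope.

Section ComplexModulus.
Variable R : realType.
Implicit Types (x y : R[i]) (r : R).

Lemma nrmC_ge0 x : 0 <= nrmC x.
Proof. exact: (@normr_ge0 _ (Rcomplex R)). Qed.

Lemma nrmCM x y : nrmC (x * y) = nrmC x * nrmC y.
Proof. exact: Normc.normcM. Qed.

Lemma nrmCD x y : nrmC (x + y) <= nrmC x + nrmC y.
Proof. exact: le_normcD. Qed.

Lemma nrmCN x : nrmC (- x) = nrmC x.
Proof. exact: normcN. Qed.

Lemma nrmC0 : nrmC (0 : R[i]) = 0.
Proof. exact: Normc.normc0. Qed.

Lemma nrmC_eq0 x : nrmC x = 0 -> x = 0.
Proof. exact: Normc.eq0_normc. Qed.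

Lemma nrmC1 : nrmC (1 : R[i]) = 1.
Proof. exact: Normc.normc1. Qed.

Lemma nrmCR r : nrmC r%:C = `|r|.
Proof. by rewrite /nrmC normc_def /= expr0n addr0 sqrtr_sqr. Qed.

Lemma nrmCJ x : nrmC x^* = nrmC x.
Proof. by rewrite /nrmC normcJ. Qed.

Lemma Re_le_nrmC x : complex.Re x <= nrmC x.
Proof.
have := normc_ge_Re x; rewrite /nrmC normc_def lecR.
exact/le_trans/ler_norm.
Qed.

Lemma mul_conj_nrmC x : x * x^* = (nrmC x ^+ 2)%:C.
Proof. by rewrite -sqr_normc /nrmC normc_def -rmorphXn. Qed.

Lemma Re_ge0 x : 0 <= x -> 0 <= complex.Re x.
Proof. by rewrite lecE => /andP[]. Qed.

Lemma ReM_ge0 x y : 0 <= x -> complex.Re (x * y) = complex.Re x * complex.Re y.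
Proof. by move=> /ger0_Im; case: x y => a b [c d] /= ->; rewrite mul0r subr0. Qed.

End ComplexModulus.

Section HahnBanach.
Variables (R : realType) (V : lmodType R[i]) (S : set V).
Hypotheses (S0 : S 0) (SD : forall x y, S x -> S y -> S (x + y))
  (SZ : forall k x, S x -> S (k *: x)).

Definition sublinear_on (q : V -> R) :=
  (forall x y, S x -> S y -> q (x + y) <= q x + q y) /\
  (forall t x, 0 <= t -> S x -> q (t%:C *: x) <= t * q x).

Lemma SN x : S x -> S (- x).
Proof. by rewrite -scaleN1r; apply: SZ. Qed.

Section Sublinear.
Variable q : V -> R.
Hypothesis q_sub : sublinear_on q.

Lemma sublinear0 : q 0 = 0.
Proof.
have [qD qZ] := q_sub; have := qZ 0 0 (lexx 0) S0; have := qD 0 0 S0 S0.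
by rewrite scale0r addr0 mul0r; lra.
Qed.

Lemma sublinearZ t x : 0 <= t -> S x -> q (t%:C *: x) = t * q x.
Proof.
move=> t_ge0 Sx; have [qD qZ] := q_sub.
have [->|t_neq0] := eqVneq t 0; first by rewrite scale0r sublinear0 mul0r.
apply/eqP; rewrite eq_le qZ //= -ler_pdivlMl ?lt_def ?t_neq0 //.
have := qZ t^-1 _ _ (SZ t%:C Sx); rewrite invr_ge0 => /(_ t_ge0).
by rewrite scalerA -rmorphM mulVf // scale1r.
Qed.

Lemma sublinearN x : S x -> - q (- x) <= q x.
Proof.
move=> Sx; have := q_sub.1 _ _ Sx (SN Sx).
by rewrite subrr sublinear0; lra.
Qed.

Definition shift (y x : V) : R :=
  inf [set q (x + t%:C *: y) - t * q y | t in [set t : R | 0 <= t]].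

Variable y : V.
Hypothesis Sy : S y.

Lemma shift_le_at x t : S x -> 0 <= t -> shift y x <= q (x + t%:C *: y) - t * q y.
Proof.
move=> Sx t_ge0; apply: ge_inf; last by exists t.
exists (- q (- x)) => _ [s s_ge0 <-].
have := q_sub.1 _ _ (SD Sx (SZ s%:C Sy)) (SN Sx).
by rewrite addrAC subrr add0r sublinearZ //; lra.
Qed.

Lemma shift_le x : S x -> shift y x <= q x.
Proof.
by move=> Sx; apply: le_trans (shift_le_at Sx (lexx 0)) _; rewrite scale0r addr0 mul0r subr0.
Qed.

Lemma shiftN : shift y (- y) <= - q y.
Proof.
apply: le_trans (shift_le_at (SN Sy) ler01) _.
by rewrite scale1r addNr sublinear0 mul1r sub0r.
Qed.

Lemma shift_sublinear : sublinear_on (shift y).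
Proof.
have shift_ne x : [set q (x + t%:C *: y) - t * q y | t in [set t : R | 0 <= t]] !=set0.
  by exists (q (x + 0%:C *: y) - 0 * q y); exists 0 => //=.
split=> [x1 x2 Sx1 Sx2|r x r_ge0 Sx].
  rewrite -lerBlDr; apply: (lb_le_inf (shift_ne _)) => _ [s s_ge0 <-].
  rewrite lerBlDr -lerBlDl; apply: (lb_le_inf (shift_ne _)) => _ [t t_ge0 <-].
  rewrite lerBlDl; apply: le_trans (shift_le_at (SD Sx1 Sx2) (addr_ge0 s_ge0 t_ge0)) _.
  have := q_sub.1 _ _ (SD Sx1 (SZ s%:C Sy)) (SD Sx2 (SZ t%:C Sy)).
  rewrite rmorphD scalerDl addrACA; lra.
have [->|r_neq0] := eqVneq r 0.
  rewrite mul0r; apply: le_trans (shift_le_at (SZ _ Sx) (lexx 0)) _.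
  by rewrite !scale0r addr0 sublinear0 mul0r subr0.
have r_gt0 : 0 < r by rewrite lt_def r_neq0.
rewrite mulrC -ler_pdivrMr //; apply: (lb_le_inf (shift_ne _)) => _ [t t_ge0 <-].
rewrite ler_pdivrMr //; apply: le_trans (shift_le_at (SZ _ Sx) (mulr_ge0 r_ge0 t_ge0)) _.
rewrite rmorphM -scalerA -scalerDr sublinearZ //; last exact: SD Sx (SZ _ Sy).
by rewrite le_eqVlt; apply/orP; left; apply/eqP; ring.
Qed.

End Sublinear.

Definition below_on (q p : V -> R) := forall x, S x -> q x <= p x.

Lemma exists_minimal_sublinear p : sublinear_on p ->
  exists2 q, sublinear_on q /\ below_on q p &
    forall q', sublinear_on q' -> below_on q' q -> below_on q q'.
Proof.
move=> p_sub; pose T := {q | sublinear_on q /\ below_on q p}.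
pose top : T := exist _ p (conj p_sub (fun x _ => lexx _)).
pose ge (q1 q2 : T) := `[< below_on (sval q2) (sval q1) >].
have [[q [q_sub q_p]] q_max] : exists q, premaximal ge q.
  apply: (ZL_preorder top) => [q|q1 q2 q3 /asboolP h12 /asboolP h23|C C_tot].
  - by apply/asboolP => x _.
  - by apply/asboolP => x Sx; exact: le_trans (h23 x Sx) (h12 x Sx).
  have [[q0 Cq0]|noC] := pselect (exists q, C q); last first.
    by exists top => q Cq; exfalso; apply: noC; exists q.
  pose qi x := inf [set sval q x | q in C].
  have qi_le q x : C q -> S x -> qi x <= sval q x.
    move=> Cq Sx; apply: ge_inf; last by exists q.
    exists (- p (- x)) => _ [q' _ <-]; have [q'_sub q'_p] := svalP q'.
    by apply: le_trans (sublinearN q'_sub Sx); rewrite lerN2 q'_p //; exact: SN.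
  have qi_ne x : [set sval q x | q in C] !=set0 by exists (sval q0 x), q0.
  have qi_sub : sublinear_on qi.
    split=> [x1 x2 Sx1 Sx2|t x t_ge0 Sx].
      rewrite -lerBlDr; apply: (lb_le_inf (qi_ne _)) => _ [q1 Cq1 <-].
      rewrite lerBlDr -lerBlDl; apply: (lb_le_inf (qi_ne _)) => _ [q2 Cq2 <-].
      rewrite lerBlDl.
      have [/asboolP q21|/asboolP q12] := C_tot _ _ Cq1 Cq2.
      + apply: le_trans (qi_le _ _ Cq2 (SD Sx1 Sx2)) _.
        apply: le_trans ((proj1 (proj1 (svalP q2))) _ _ Sx1 Sx2) _.
        by rewrite lerD2r q21.
      + apply: le_trans (qi_le _ _ Cq1 (SD Sx1 Sx2)) _.
        apply: le_trans ((proj1 (proj1 (svalP q1))) _ _ Sx1 Sx2) _.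
        by rewrite lerD2l q12.
    have [->|t_neq0] := eqVneq t 0.
      rewrite scale0r mul0r; apply: le_trans (qi_le _ _ Cq0 S0) _.
      by rewrite (sublinear0 (proj1 (svalP q0))).
    have t_gt0 : 0 < t by rewrite lt_def t_neq0.
    rewrite mulrC -ler_pdivrMr //; apply: (lb_le_inf (qi_ne _)) => _ [q Cq <-].
    rewrite ler_pdivrMr // mulrC; apply: le_trans (qi_le _ _ Cq (SZ _ Sx)) _.
    exact: (proj2 (proj1 (svalP q))).
  have qi_p : below_on qi p.
    by move=> x Sx; apply: le_trans (qi_le _ _ Cq0 Sx) _; exact: (proj2 (svalP q0)).
  exists (exist _ qi (conj qi_sub qi_p)) => q Cq.
  by apply/asboolP => x Sx; exact: qi_le.
exists q => // q' q'_sub q'_q.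
have q'_p : below_on q' p by move=> x Sx; exact: le_trans (q'_q x Sx) (q_p x Sx).
by apply/asboolP; apply: (q_max (exist _ q' (conj q'_sub q'_p))); apply/asboolP.
Qed.

Definition real_linear_on (q : V -> R) :=
  (forall x y, S x -> S y -> q (x + y) = q x + q y) /\
  (forall t x, S x -> q (t%:C *: x) = t * q x).

Lemma minimal_sublinear_linear q : sublinear_on q ->
  (forall q', sublinear_on q' -> below_on q' q -> below_on q q') -> real_linear_on q.
Proof.
move=> q_sub q_min.
have qN y : S y -> q (- y) = - q y.
  move=> Sy; have := q_min _ (shift_sublinear q_sub Sy) (shift_le q_sub Sy) _ (SN Sy).
  have := shiftN q_sub Sy; have := sublinearN q_sub Sy; lra.
have qD x y : S x -> S y -> q (x + y) = q x + q y.
  move=> Sx Sy; apply/eqP; rewrite eq_le q_sub.1 //=.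
  have := q_sub.1 _ _ (SN Sx) (SN Sy); rewrite -opprD !qN //; [lra|exact: SD].
split=> // t x Sx; have [t_ge0|t_lt0] := leP 0 t; first exact: sublinearZ.
rewrite -[t]opprK rmorphN scaleNr qN; last exact: SZ.
rewrite (sublinearZ q_sub) //; last by rewrite oppr_ge0 ltW.
by rewrite opprK mulNr opprK.
Qed.

Lemma exists_linear_below p : sublinear_on p -> exists2 q, real_linear_on q & below_on q p.
Proof.
move=> /exists_minimal_sublinear [q [q_sub q_p] q_min].
by exists q => //; exact: minimal_sublinear_linear.
Qed.

Variable p : V -> R.
Hypotheses (pD : forall x y, S x -> S y -> p (x + y) <= p x + p y)
  (pZ : forall k x, S x -> p (k *: x) <= nrmC k * p x).

Lemma seminorm_sublinear : sublinear_on p.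
Proof. by split=> // t x t_ge0 Sx; rewrite -[t in t * _]ger0_norm // -nrmCR pZ. Qed.

Lemma seminorm_ge0 x : S x -> 0 <= p x.
Proof.
move=> Sx; have := pZ (-1) Sx; rewrite scaleN1r nrmCN nrmC1 mul1r.
have := sublinearN seminorm_sublinear Sx; lra.
Qed.

Theorem Hahn_Banach y : S y -> exists L : V -> R[i],
  [/\ forall x z, S x -> S z -> L (x + z) = L x + L z,
      forall k x, S x -> L (k *: x) = k * L x,
      forall x, S x -> nrmC (L x) <= p x & nrmC (L y) = p y].
Proof.
move=> Sy.
have [q [qD qZ] q_shift] := exists_linear_below (shift_sublinear seminorm_sublinear Sy).
have q_p x : S x -> q x <= p x.
  by move=> Sx; exact: le_trans (q_shift x Sx) (shift_le seminorm_sublinear Sy Sx).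
have qN x : S x -> q (- x) = - q x.
  by move=> Sx; rewrite -scaleN1r -(rmorphN1 (real_complex R)) qZ // mulN1r.
have q_y : p y <= q y.
  have := q_shift _ (SN Sy); rewrite qN //.
  have := shiftN seminorm_sublinear Sy; lra.
pose L x := (q x)%:C - 'i * (q ('i *: x))%:C.
have ReL x : complex.Re (L x) = q x by rewrite /= !mul0r !mul1r subr0 oppr0 addr0.
have LD x z : S x -> S z -> L (x + z) = L x + L z.
  by move=> Sx Sz; rewrite /L scalerDr !qD ?rmorphD //; [ring|exact: SZ..].
have i2 : 'i * 'i = -1 :> R[i] by rewrite -expr2 sqr_i.
have LZ k x : S x -> L (k *: x) = k * L x.
  move=> Sx; have Six : S ('i *: x) by exact: SZ.
  have kE : k = (complex.Re k)%:C + 'i * (complex.Im k)%:C by exact: complexE.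
  set a := complex.Re k in kE *; set b := complex.Im k in kE *.
  have kx : k *: x = a%:C *: x + b%:C *: ('i *: x).
    by rewrite kE scalerDl scalerA [b%:C * _]mulrC.
  have ikx : 'i *: (k *: x) = a%:C *: ('i *: x) + (- b)%:C *: x.
    by rewrite scalerA kE scalerA -scalerDl rmorphN; congr (_ *: _); ring: i2.
  rewrite /L ikx kx !qD ?qZ //; try exact: SZ.
  rewrite kE !rmorphD !rmorphM rmorphN; ring: i2.
have L_le x : S x -> nrmC (L x) <= p x.
  move=> Sx; set z := L x; have [->|z_neq0] := eqVneq z 0.
    by rewrite nrmC0 seminorm_ge0.
  have n_neq0 : nrmC z != 0 by apply: contra z_neq0 => /eqP /nrmC_eq0 ->.
  pose w := z^* * (nrmC z)^-1%:C.
  have Lwx : L (w *: x) = (nrmC z)%:C.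
    rewrite LZ // -/z /w mulrAC [z^* * z]mulrC mul_conj_nrmC -rmorphM.
    by rewrite expr2 -mulrA mulfV ?mulr1.
  have nw : nrmC w = 1.
    by rewrite /w nrmCM nrmCJ nrmCR ger0_norm ?invr_ge0 ?nrmC_ge0 // mulfV.
  have := pZ w Sx; rewrite nw mul1r; apply: le_trans.
  by have := q_p _ (SZ w Sx); rewrite -ReL Lwx.
exists L; split=> //; apply/eqP; rewrite eq_le L_le //=.
by apply: le_trans q_y _; rewrite -ReL Re_le_nrmC.
Qed.

End HahnBanach.

Section SupImage.
Variables (R : realType) (U : Type).
Implicit Types (D : set U) (f : U -> R).

Lemma le_sup_image D f c x :
  (forall y, D y -> f y <= c) -> D x -> f x <= sup [set f y | y in D].
Proof.
move=> f_le Dx; apply: ub_le_sup; last by exists x.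
by exists c => _ [y Dy <-]; exact: f_le.
Qed.

Lemma sup_image_le D f r :
  D !=set0 -> (forall x, D x -> f x <= r) -> sup [set f x | x in D] <= r.
Proof.
move=> [x Dx] f_le; apply: ge_sup; first by exists (f x), x.
by move=> _ [y Dy <-]; exact: f_le.
Qed.

Lemma ler_mul_unit_norm (c x : R) : 0 <= x -> x <= 1 -> c * x <= `|c|.
Proof. by move=> x_ge0 x_le1; apply: le_trans (ler_piMr (normr_ge0 c) x_le1); rewrite ler_wpM2r ?ler_norm. Qed.

Lemma homogeneous_unit_ball_bound D (N g : U -> R) (sc : R -> U -> U) (M c : R) :
  (forall t x, 0 < t -> D x ->
     [/\ D (sc t x), N (sc t x) <= t * N x & g (sc t x) = t * g x]) ->
  (forall x, D x -> 0 <= N x) -> (forall x, D x -> g x <= c * N x) ->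
  (forall x, D x -> N x <= 1 -> g x <= M) ->
  forall x, D x -> g x <= M * N x.
Proof.
move=> scP N_ge0 g_le g_ball x Dx; have [N0|N_neq0] := eqVneq (N x) 0.
  by apply: le_trans (g_le x Dx) _; rewrite N0 !mulr0.
have N_gt0 : 0 < N x by rewrite lt_def N_neq0 N_ge0.
have Ninv_gt0 : 0 < (N x)^-1 by rewrite invr_gt0.
have [Dy Ny gy] := scP _ _ Ninv_gt0 Dx.
rewrite mulrC -ler_pdivrMl // -gy; apply: g_ball => //.
by apply: le_trans Ny _; rewrite mulVf.
Qed.

End SupImage.

Section Blocks.
Variables (T : Type) (x0 : T) (b : nat -> seq T).

Definition cat_blocks n := flatten (mkseq b n).
Definition nth_blocks k := nth x0 (cat_blocks k.+1) k.

Lemma cat_blocksS n : cat_blocks n.+1 = cat_blocks n ++ b n.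
Proof. by rewrite /cat_blocks mkseqS flatten_rcons. Qed.

Lemma cat_blocks_prefix m n : (m <= n)%N -> exists r, cat_blocks n = cat_blocks m ++ r.
Proof.
move=> /subnK <-; elim: (n - m)%N => [|k [r rE]]; first by exists [::]; rewrite cats0.
by exists (r ++ b (k + m)); rewrite addSn cat_blocksS rE catA.
Qed.

Hypothesis b_nonempty : forall n, (0 < size (b n))%N.

Lemma size_cat_blocks n : (n <= size (cat_blocks n))%N.
Proof.
by elim: n => // n IHn; rewrite cat_blocksS size_cat -addn1 leq_add.
Qed.

Lemma take_cat_blocks n N : (N <= size (cat_blocks n))%N ->
  take N (cat_blocks n) = mkseq nth_blocks N.
Proof.
elim: N => [|N IHN] N_lt; first by rewrite take0.
rewrite (take_nth x0 N_lt) mkseqS IHN; last exact: ltnW.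
congr rcons; have [r1 r1E] := cat_blocks_prefix (leq_maxl n N.+1).
have [r2 r2E] := cat_blocks_prefix (leq_maxr n N.+1).
have -> : nth x0 (cat_blocks n) N = nth x0 (cat_blocks (maxn n N.+1)) N.
  by rewrite r1E nth_cat N_lt.
by rewrite /nth_blocks r2E nth_cat size_cat_blocks.
Qed.

End Blocks.

Section BanachModule.
Variables (R : realType) (A : completeNormedModType R[i]) (mul : A -> A -> A).
Variable X : set (A -> R[i]).
Hypothesis X_sub : closed_left_submodule mul X.

Local Notation C := R[i].
Local Notation AX := (A -> (A -> C) -> C).
Local Notation BA := (in_BA mul X).
Implicit Types (a b : A) (phi psi : A -> C) (mu : (A -> C) -> C) (T : AX) (F G H : AX -> C).
Implicit Types (s : seq (A * (A -> C))).

Lemma X_dual phi : X phi -> in_dualA phi.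
Proof. by case: X_sub => + _ _ _ _; apply. Qed.

Lemma X0 : X 0.
Proof. by case: X_sub. Qed.

Lemma X_comb k phi psi : X phi -> X psi -> X (fun b => k * phi b + psi b).
Proof. by case: X_sub => _ _ + _ _; apply. Qed.

Lemma X_act a phi : X phi -> X (actL mul a phi).
Proof. by case: X_sub => _ _ _ _; apply. Qed.

Lemma X_scale k phi : X phi -> X (fun b => k * phi b).
Proof.
move=> Xphi; have -> : (fun b => k * phi b) = fun b => k * phi b + 0.
  by apply/funext => b; rewrite addr0.
exact: X_comb Xphi X0.
Qed.

Lemma nrmA_ge0 a : 0 <= nrmA a.
Proof. exact/Re_ge0/normr_ge0. Qed.

Lemma nrmA0 : nrmA (0 : A) = 0.
Proof. by rewrite /nrmA normr0. Qed.

Lemma nrmAZ k a : nrmA (k *: a) = nrmC k * nrmA a.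
Proof. by rewrite /nrmA normrZ ReM_ge0. Qed.

Lemma dnorm_ub phi a : in_dualA phi -> nrmA a <= 1 -> nrmC (phi a) <= dnorm phi.
Proof.
case=> _ [c phi_le] a_le1; apply: (le_sup_image (f := fun b => nrmC (phi b)) (c := `|c|)) a_le1 => b b_le1.
exact: le_trans (phi_le b) (ler_mul_unit_norm _ (nrmA_ge0 b) b_le1).
Qed.

Lemma dnorm_ge0 phi : in_dualA phi -> 0 <= dnorm phi.
Proof. by move=> phi_dual; apply: le_trans (dnorm_ub (a := 0) phi_dual _); rewrite ?nrmC_ge0 ?nrmA0. Qed.

Lemma dnorm_le phi r : (forall a, nrmA a <= 1 -> nrmC (phi a) <= r) -> dnorm phi <= r.
Proof. by apply: sup_image_le; exists 0; rewrite /= nrmA0. Qed.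

Lemma dnormZ k phi : in_dualA phi -> dnorm (fun b => k * phi b) <= nrmC k * dnorm phi.
Proof.
move=> phi_dual; apply: dnorm_le => a a_le1; rewrite nrmCM.
by rewrite ler_wpM2l ?nrmC_ge0 ?dnorm_ub.
Qed.

Lemma dualX0 mu : in_dualX X mu -> mu 0 = 0.
Proof.
case=> m_lin _; have := m_lin 1 0 0 X0 X0; rewrite mul1r.
have -> : (fun b => 1 * (0 : A -> C) b + 0 b) = 0 by apply/funext => b; rewrite mulr0 addr0.
by move=> m00; apply: (addrI (mu 0)); rewrite addr0 -m00.
Qed.

Lemma dualXZ mu k phi : in_dualX X mu -> X phi -> mu (fun b => k * phi b) = k * mu phi.
Proof.
move=> m_dual Xphi; case: (m_dual) => m_lin _; have := m_lin k phi 0 Xphi X0.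
by rewrite dualX0 // addr0 => <-; congr mu; apply/funext => b; rewrite addr0.
Qed.

Lemma dnorm0_le1 : dnorm (0 : A -> C) <= 1.
Proof. by apply: dnorm_le => a _; rewrite nrmC0. Qed.

Lemma xnorm_ub mu phi : in_dualX X mu -> X phi -> dnorm phi <= 1 -> nrmC (mu phi) <= xnorm X mu.
Proof.
case=> _ [c m_le] Xphi phi_le1.
apply: (le_sup_image (f := fun psi => nrmC (mu psi)) (c := `|c|)) => // psi [Xpsi psi_le1].
exact: le_trans (m_le _ Xpsi) (ler_mul_unit_norm _ (dnorm_ge0 (X_dual Xpsi)) psi_le1).
Qed.

Lemma xnorm_le mu r :
  (forall phi, X phi -> dnorm phi <= 1 -> nrmC (mu phi) <= r) -> xnorm X mu <= r.
Proof. by move=> m_le; apply: sup_image_le => [|phi []]; [exists 0; split; [exact: X0|exact: dnorm0_le1]|exact: m_le]. Qed.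

Lemma xnorm_ge0 mu : in_dualX X mu -> 0 <= xnorm X mu.
Proof. by move=> m_dual; apply: le_trans (xnorm_ub m_dual X0 dnorm0_le1); exact: nrmC_ge0. Qed.

Lemma xnormZ k mu : in_dualX X mu -> xnorm X (fun phi => k * mu phi) <= nrmC k * xnorm X mu.
Proof.
move=> m_dual; apply: xnorm_le => phi Xphi phi_le1; rewrite nrmCM.
by rewrite ler_wpM2l ?nrmC_ge0 ?xnorm_ub.
Qed.

Lemma BA_dualX T a : BA T -> in_dualX X (T a).
Proof. by case=> + _ _ _; apply. Qed.

Lemma BAZr T k a phi : BA T -> X phi -> T (k *: a) phi = k * T a phi.
Proof.
move=> T_BA Xphi; case: (T_BA) => _ T_lin _ _.
have T0 : T 0 phi = 0.
  have := T_lin 1 0 0 phi Xphi; rewrite scale1r addr0 mul1r => T00.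
  by apply: (addrI (T 0 phi)); rewrite addr0 -T00.
by have := T_lin k a 0 phi Xphi; rewrite !addr0 T0 addr0.
Qed.

Lemma Mnorm_ub T a : BA T -> nrmA a <= 1 -> xnorm X (T a) <= Mnorm X T.
Proof.
case=> T_dual _ [c T_le] _ a_le1.
apply: (le_sup_image (f := fun b => xnorm X (T b)) (c := `|c|)) a_le1 => b b_le1.
exact: le_trans (T_le b) (ler_mul_unit_norm _ (nrmA_ge0 b) b_le1).
Qed.

Lemma Mnorm_le T r : (forall a, nrmA a <= 1 -> xnorm X (T a) <= r) -> Mnorm X T <= r.
Proof. by apply: sup_image_le; exists 0; rewrite /= nrmA0. Qed.

Lemma Mnorm_ge0 T : BA T -> 0 <= Mnorm X T.
Proof.
move=> T_BA; apply: le_trans (Mnorm_ub (a := 0) T_BA _); last by rewrite nrmA0.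
exact/xnorm_ge0/BA_dualX.
Qed.

Lemma BA_bound T a phi : BA T -> X phi ->
  nrmC (T a phi) <= Mnorm X T * nrmA a * dnorm phi.
Proof.
move=> T_BA; have [T_dual _ [c T_le] _] := T_BA.
have ball_bound psi : X psi -> dnorm psi <= 1 -> forall b,
    nrmC (T b psi) <= Mnorm X T * nrmA b.
  move=> Xpsi psi_le1 b; apply: (homogeneous_unit_ball_bound (D := setT) (N := @nrmA R A)
    (g := fun b => nrmC (T b psi)) (sc := fun t b => t%:C *: b) (c := c))
    => // [t {}b t_gt0 _|{}b _|{}b _|{}b _ b_le1].
  - by rewrite /= nrmAZ (BAZr _ _ T_BA Xpsi) nrmCM nrmCR gtr0_norm.
  - exact: nrmA_ge0.
  - exact: le_trans (xnorm_ub (T_dual b) Xpsi psi_le1) (T_le b).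
  - exact: le_trans (xnorm_ub (T_dual b) Xpsi psi_le1) (Mnorm_ub T_BA b_le1).
case: (T_dual a) => _ [c' Ta_le].
apply: (homogeneous_unit_ball_bound (N := @dnorm R A) (g := fun psi => nrmC (T a psi))
  (sc := fun t psi b => t%:C * psi b) (c := c')) => // [t psi t_gt0 Xpsi|psi Xpsi|psi Xpsi psi_le1].
- split; [exact: X_scale|apply: le_trans (dnormZ _ (X_dual Xpsi)) _|].
    by rewrite nrmCR gtr0_norm.
  by rewrite (dualXZ _ (T_dual a) Xpsi) nrmCM nrmCR gtr0_norm.
- exact/dnorm_ge0/X_dual.
- exact: ball_bound.
Qed.

Lemma BA0 : BA 0.
Proof.
split=> [a|k a b phi _|/=|//]; first split=> [k phi psi _ _|].
- by rewrite /= mulr0 addr0.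
- by exists 0 => phi _; rewrite /= nrmC0 mul0r.
- by rewrite /= mulr0 addr0.
- by exists 0 => a; rewrite mul0r; apply: xnorm_le => phi _ _; rewrite nrmC0.
Qed.

Lemma Mnorm0_le1 : Mnorm X 0 <= 1.
Proof. by apply: Mnorm_le => a _; apply: xnorm_le => phi _ _; rewrite nrmC0. Qed.

Lemma BAZ k T : BA T -> BA (fun a phi => k * T a phi).
Proof.
case=> T_dual T_lin [c T_le] T_mod; split=> [a|k' a b phi Xphi|/=|a b phi Xphi /=].
- have [Ta_lin [c' Ta_le]] := T_dual a; split=> [k' phi psi Xphi Xpsi|] /=.
    by rewrite Ta_lin //; ring.
  exists (nrmC k * c') => phi Xphi; rewrite nrmCM -mulrA.
  by rewrite ler_wpM2l ?nrmC_ge0 ?Ta_le.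
- by rewrite /= T_lin //; ring.
- exists (nrmC k * c) => a; apply: le_trans (xnormZ _ (T_dual a)) _.
  by rewrite -mulrA ler_wpM2l ?nrmC_ge0.
- by rewrite T_mod.
Qed.

Lemma MnormZ k T : BA T -> Mnorm X (fun a phi => k * T a phi) <= nrmC k * Mnorm X T.
Proof.
move=> T_BA; apply: Mnorm_le => a a_le1; apply: le_trans (xnormZ _ (BA_dualX _ T_BA)) _.
by rewrite ler_wpM2l ?nrmC_ge0 ?Mnorm_ub.
Qed.

Lemma dualBA0 H : in_dualBA mul X H -> H 0 = 0.
Proof.
case=> H_lin _; have := H_lin 1 0 0 BA0 BA0; rewrite mul1r.
have -> : (fun a phi => 1 * (0 : AX) a phi + 0 a phi) = 0.
  by apply/funext => a; apply/funext => phi; rewrite /= mulr0 addr0.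
by move=> H00; apply: (addrI (H 0)); rewrite addr0 -H00.
Qed.

Lemma dualBAZ H k T : in_dualBA mul X H -> BA T -> H (fun a phi => k * T a phi) = k * H T.
Proof.
move=> H_dual T_BA; case: (H_dual) => H_lin _; have := H_lin k T 0 T_BA BA0.
rewrite dualBA0 // addr0 => <-; congr H.
by apply/funext => a; apply/funext => phi; rewrite /= addr0.
Qed.

Lemma dMnorm_ub H T : in_dualBA mul X H -> BA T -> Mnorm X T <= 1 ->
  nrmC (H T) <= dMnorm mul X H.
Proof.
case=> _ [c H_le] T_BA T_le1.
apply: (le_sup_image (f := fun S => nrmC (H S)) (c := `|c|)) => // S [S_BA S_le1].
exact: le_trans (H_le _ S_BA) (ler_mul_unit_norm _ (Mnorm_ge0 S_BA) S_le1).
Qed.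

Lemma dMnorm_le H r : 0 <= r -> (forall T, BA T -> nrmC (H T) <= r * Mnorm X T) ->
  dMnorm mul X H <= r.
Proof.
move=> r_ge0 H_le; apply: sup_image_le => [|T [T_BA T_le1]].
  by exists 0; split; [exact: BA0|exact: Mnorm0_le1].
by apply: le_trans (H_le _ T_BA) _; rewrite ler_piMr.
Qed.

Lemma dMnorm_ge0 H : in_dualBA mul X H -> 0 <= dMnorm mul X H.
Proof. by move=> H_dual; apply: le_trans (dMnorm_ub H_dual BA0 Mnorm0_le1); exact: nrmC_ge0. Qed.

Lemma dMnorm_bound H T : in_dualBA mul X H -> BA T ->
  nrmC (H T) <= dMnorm mul X H * Mnorm X T.
Proof.
move=> H_dual; have [_ [c H_le]] := H_dual.
apply: (homogeneous_unit_ball_bound (N := Mnorm X) (g := fun S => nrmC (H S))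
  (sc := fun t S a phi => t%:C * S a phi) (c := c)) => // [t S t_gt0 S_BA|S S_BA|S S_BA S_le1].
- split; [exact: BAZ|apply: le_trans (MnormZ _ S_BA) _|].
    by rewrite nrmCR gtr0_norm.
  by rewrite (dualBAZ _ H_dual S_BA) nrmCM nrmCR gtr0_norm.
- exact: Mnorm_ge0.
- exact: dMnorm_ub.
Qed.

Lemma dualBAB H1 H2 : in_dualBA mul X H1 -> in_dualBA mul X H2 ->
  in_dualBA mul X (fun T => H1 T - H2 T).
Proof.
move=> [H1_lin [c1 H1_le]] [H2_lin [c2 H2_le]]; split.
  by move=> k T S T_BA S_BA; rewrite H1_lin // H2_lin //; ring.
exists (c1 + c2) => T T_BA; apply: le_trans (nrmCD _ _) _.
by rewrite nrmCN mulrDl lerD ?H1_le ?H2_le.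
Qed.

Lemma dMnorm_le_sub H1 H2 G : in_dualBA mul X H1 -> in_dualBA mul X H2 ->
  (forall T, BA T -> G T = H1 T - H2 T) -> dMnorm mul X G <= dMnorm mul X H1 + dMnorm mul X H2.
Proof.
move=> H1_dual H2_dual GE; apply: dMnorm_le => [|T T_BA].
  by rewrite addr_ge0 ?dMnorm_ge0.
rewrite GE // mulrDl; apply: le_trans (nrmCD _ _) _.
by rewrite nrmCN lerD ?dMnorm_bound.
Qed.

Definition fsum s : AX -> C := fun T => \sum_(t <- s) T t.1 t.2.
Definition fcost s : R := \sum_(t <- s) nrmA t.1 * dnorm t.2.
Definition X_terms s := {in s, forall t, X t.2}.

Lemma X_terms_cat s1 s2 : X_terms (s1 ++ s2) <-> X_terms s1 /\ X_terms s2.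
Proof.
split=> [Xs|[Xs1 Xs2] t]; last by rewrite mem_cat => /orP[]; [exact: Xs1|exact: Xs2].
by split=> t ts; apply: Xs; rewrite mem_cat ts ?orbT.
Qed.

Lemma fsum_cat s1 s2 T : fsum (s1 ++ s2) T = fsum s1 T + fsum s2 T.
Proof. exact: big_cat. Qed.

Lemma fcost_cat s1 s2 : fcost (s1 ++ s2) = fcost s1 + fcost s2.
Proof. exact: big_cat. Qed.

Lemma fcost_ge0 s : X_terms s -> 0 <= fcost s.
Proof.
move=> Xs; rewrite /fcost big_seq; apply: sumr_ge0 => t ts.
by apply: mulr_ge0; [exact: nrmA_ge0|exact: dnorm_ge0 (X_dual (Xs t ts))].
Qed.

Lemma fsum_bound s T : X_terms s -> BA T -> nrmC (fsum s T) <= fcost s * Mnorm X T.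
Proof.
elim: s => [|t s IHs] Xts T_BA; first by rewrite /fsum /fcost !big_nil nrmC0 mul0r.
rewrite /fsum /fcost !big_cons mulrDl; apply: le_trans (nrmCD _ _) _.
apply: lerD; last by apply: IHs => // u us; apply: (Xts u); rewrite inE us orbT.
rewrite [_ * Mnorm X T]mulrC mulrA.
by apply: BA_bound => //; apply: (Xts t); rewrite inE eqxx.
Qed.

Lemma fsum_dual s : X_terms s -> in_dualBA mul X (fsum s).
Proof.
move=> Xs; split; last by exists (fcost s) => T; exact: fsum_bound.
by move=> k T S _ _; rewrite /fsum big_split mulr_sumr.
Qed.

Definition represents s G := X_terms s /\ forall T, BA T -> G T = fsum s T.
Definition in_fspan G := exists s, represents s G.
Definition pnorm G : R := inf [set fcost s | s in [set s | represents s G]].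

Definition scale_terms (k : C) s := [seq (k *: t.1, t.2) | t <- s].

Lemma X_terms_scale k s : X_terms s -> X_terms (scale_terms k s).
Proof. by move=> Xs u /mapP[t ts ->]; exact: (Xs t ts). Qed.

Lemma fsum_scale k s T : X_terms s -> BA T -> fsum (scale_terms k s) T = k * fsum s T.
Proof.
move=> Xs T_BA; rewrite /fsum big_map mulr_sumr big_seq [RHS]big_seq.
by apply: eq_bigr => t ts; rewrite (BAZr _ _ T_BA (Xs t ts)).
Qed.

Lemma fcost_scale k s : fcost (scale_terms k s) = nrmC k * fcost s.
Proof. by rewrite /fcost big_map mulr_sumr; apply: eq_bigr => t _; rewrite nrmAZ mulrA. Qed.

Lemma represents_add s1 s2 G1 G2 : represents s1 G1 -> represents s2 G2 ->
  represents (s1 ++ s2) (G1 + G2).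
Proof.
move=> [Xs1 G1E] [Xs2 G2E]; split; first exact/X_terms_cat.
by move=> T T_BA; rewrite fsum_cat -G1E -?G2E.
Qed.

Lemma represents_scale k s G : represents s G -> represents (scale_terms k s) (k *: G).
Proof.
move=> [Xs GE]; split; first exact: X_terms_scale.
by move=> T T_BA; rewrite fsum_scale // -GE.
Qed.

Lemma represents_fsum s : X_terms s -> represents s (fsum s).
Proof. by []. Qed.

Lemma represents_elem a phi : X phi -> represents [:: (a, phi)] (elem a phi).
Proof. by move=> Xphi; split=> [t|T _]; [rewrite inE => /eqP ->|rewrite /fsum big_seq1]. Qed.

Lemma pnorm_le s G : represents s G -> pnorm G <= fcost s.
Proof.
move=> sG; apply: ge_inf; last by exists s.
by exists 0 => _ [t [Xt _] <-]; exact: fcost_ge0.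
Qed.

Lemma pnormD G1 G2 : in_fspan G1 -> in_fspan G2 -> pnorm (G1 + G2) <= pnorm G1 + pnorm G2.
Proof.
move=> [s1 s1G1] [s2 s2G2].
rewrite -lerBlDr; apply: lb_le_inf; first by exists (fcost s1), s1.
move=> _ [t1 t1G1 <-]; rewrite lerBlDr -lerBlDl.
apply: lb_le_inf; first by exists (fcost s2), s2.
move=> _ [t2 t2G2 <-]; rewrite lerBlDl -fcost_cat.
exact/pnorm_le/represents_add.
Qed.

Lemma pnormZ k G : in_fspan G -> pnorm (k *: G) <= nrmC k * pnorm G.
Proof.
move=> [s sG]; have [k0|k_neq0] := eqVneq (nrmC k) 0.
  by rewrite k0 mul0r; apply: le_trans (pnorm_le (represents_scale k sG)) _; rewrite fcost_scale k0 mul0r.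
have k_gt0 : 0 < nrmC k by rewrite lt_def k_neq0 nrmC_ge0.
rewrite mulrC -ler_pdivrMr //; apply: lb_le_inf; first by exists (fcost s), s.
move=> _ [t tG <-]; rewrite ler_pdivrMr // mulrC -fcost_scale.
exact/pnorm_le/represents_scale.
Qed.

Lemma fspan0 : in_fspan 0.
Proof. by exists [::]; split=> // T _; rewrite /fsum big_nil. Qed.

Lemma fspanD G1 G2 : in_fspan G1 -> in_fspan G2 -> in_fspan (G1 + G2).
Proof. by move=> [s1 s1G1] [s2 s2G2]; exists (s1 ++ s2); exact: represents_add. Qed.

Lemma fspanZ k G : in_fspan G -> in_fspan (k *: G).
Proof. by move=> [s sG]; exists (scale_terms k s); exact: represents_scale. Qed.

Lemma pnorm_fsum_le_dMnorm s : X_terms s -> pnorm (fsum s) <= dMnorm mul X (fsum s).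
Proof.
move=> Xs.
have [L [LD LZ L_le Ls]] := Hahn_Banach fspan0 fspanD fspanZ pnormD pnormZ (ex_intro _ s (represents_fsum Xs)).
have fspan_elem a phi : X phi -> in_fspan (elem a phi).
  by move=> Xphi; exists [:: (a, phi)]; exact: represents_elem.
have L_eq G1 G2 : in_fspan G1 -> in_fspan G2 -> (forall T, BA T -> G1 T = G2 T) -> L G1 = L G2.
  move=> G1s G2s G12; have G2Ns : in_fspan (- G2) by rewrite -scaleN1r; exact: fspanZ.
  have L0 : nrmC (L (G1 - G2)) <= 0.
    apply: le_trans (L_le _ (fspanD G1s G2Ns)) (le_trans (pnorm_le (s := [::]) _) _).
      by split=> // T T_BA; rewrite /fsum big_nil -[LHS]/(G1 T - G2 T) G12 // subrr.
    by rewrite /fcost big_nil.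
  have /nrmC_eq0/eqP : nrmC (L (G1 - G2)) = 0 by apply/le_anti; rewrite L0 nrmC_ge0.
  by rewrite LD // -scaleN1r LZ // mulN1r subr_eq0 => /eqP.
pose T0 : AX := fun a phi => L (elem a phi).
have T0_le a phi : X phi -> nrmC (T0 a phi) <= nrmA a * dnorm phi.
  move=> Xphi; apply: le_trans (L_le _ (fspan_elem a phi Xphi)) _.
  by apply: le_trans (pnorm_le (represents_elem a Xphi)) _; rewrite /fcost big_seq1.
have T0_BA : BA T0.
  split=> [a|k a b phi Xphi|/=|a b phi Xphi].
  - split=> [k phi psi Xphi Xpsi|]; last by exists (nrmA a) => phi; exact: T0_le.
    rewrite /T0 -LZ; last exact: fspan_elem.
    rewrite -(LD (k *: elem a phi)); [|exact: fspanZ (fspan_elem _ _ Xphi)|exact: fspan_elem].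
    apply: L_eq; first exact: fspan_elem (X_comb _ Xphi Xpsi).
      by apply: fspanD; [apply: fspanZ|]; exact: fspan_elem.
    by move=> T T_BA; case: (BA_dualX a T_BA) => T_lin _; exact: T_lin.
  - rewrite /T0 -LZ; last exact: fspan_elem.
    rewrite -(LD (k *: elem a phi)); [|exact: fspanZ (fspan_elem _ _ Xphi)|exact: fspan_elem].
    apply: L_eq; first exact: fspan_elem.
      by apply: fspanD; [apply: fspanZ|]; exact: fspan_elem.
    by move=> T [_ T_lin _ _]; exact: T_lin.
  - exists 1 => a; rewrite mul1r; apply: xnorm_le => phi Xphi phi_le1.
    by apply: le_trans (T0_le a phi Xphi) _; rewrite ler_piMr ?nrmA_ge0.
  - apply: L_eq; [exact: fspan_elem|exact: fspan_elem (X_act _ Xphi)|].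
    by move=> T [_ _ _ T_mod]; exact: T_mod.
have T0_le1 : Mnorm X T0 <= 1.
  apply: Mnorm_le => a a_le1; apply: xnorm_le => phi Xphi phi_le1.
  apply: le_trans (T0_le a phi Xphi) _.
  by rewrite mulr_ile1 ?nrmA_ge0 ?(dnorm_ge0 (X_dual Xphi)).
have fsumT0 t : X_terms t -> fsum t T0 = L (fsum t).
  elim: t => [|u t IHt] Xut.
    have -> : fsum [::] = 0 by apply/funext => T; rewrite /fsum big_nil.
    by have := LZ 0 0 fspan0; rewrite scale0r mul0r => ->.
  have Xu : X u.2 by apply: Xut; rewrite inE eqxx.
  have Xt : X_terms t by move=> v vt; apply: Xut; rewrite inE vt orbT.
  rewrite [LHS]/fsum big_cons -/(fsum t T0) IHt //.
  have -> : fsum (u :: t) = elem u.1 u.2 + fsum t by apply/funext => T; rewrite /fsum big_cons.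
  by rewrite LD //; [exact: fspan_elem|exists t].
rewrite -Ls -fsumT0 //; exact: dMnorm_ub (fsum_dual Xs) T0_BA T0_le1.
Qed.

Lemma X_terms_take N s : X_terms s -> X_terms (take N s).
Proof. by move=> Xs t /mem_take; exact: Xs. Qed.

Lemma fcost_take N s : X_terms s -> fcost (take N s) <= fcost s.
Proof.
move=> Xs; rewrite -{2}(cat_take_drop N s) fcost_cat lerDl.
by apply: fcost_ge0 => t /mem_drop; exact: Xs.
Qed.

Lemma fsum_mkseq (a : nat -> A) (phi : nat -> A -> C) N T :
  fsum (mkseq (fun i => (a i, phi i)) N) T = \sum_(0 <= i < N) elem (a i) (phi i) T.
Proof. by rewrite /fsum /mkseq big_map /index_iota subn0. Qed.

Lemma fcost_mkseq (a : nat -> A) (phi : nat -> A -> C) N :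
  fcost (mkseq (fun i => (a i, phi i)) N) = series (fun i => nrmA (a i) * dnorm (phi i)) N.
Proof. by rewrite /series /= /fcost /mkseq big_map /index_iota subn0. Qed.

Lemma X_terms_mkseq (a : nat -> A) (phi : nat -> A -> C) N :
  (forall i, X (phi i)) -> X_terms (mkseq (fun i => (a i, phi i)) N).
Proof. by move=> Xphi t; rewrite /mkseq => /mapP[i _ ->]; exact: Xphi. Qed.

Lemma nondecreasing_series_cost (a : nat -> A) (phi : nat -> A -> C) :
  (forall i, X (phi i)) ->
  {homo series (fun i => nrmA (a i) * dnorm (phi i)) : n m / (n <= m)%N >-> n <= m}.
Proof.
move=> Xphi; apply: nondecreasing_series => n _ _.
exact: mulr_ge0 (nrmA_ge0 _) (dnorm_ge0 (X_dual (Xphi n))).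
Qed.

Lemma fcost_le_rep_cost F (a : nat -> A) (phi : nat -> A -> C) N :
  is_rep mul X F a phi -> fcost (mkseq (fun i => (a i, phi i)) N) <= rep_cost a phi.
Proof.
by case=> Xphi cost_cvg _; rewrite fcost_mkseq; exact: nondecreasing_cvgn_le (nondecreasing_series_cost _ Xphi) cost_cvg N.
Qed.

Lemma dMnorm_le_rep_cost F (a : nat -> A) (phi : nat -> A -> C) :
  in_dualBA mul X F -> is_rep mul X F a phi -> dMnorm mul X F <= rep_cost a phi.
Proof.
move=> F_dual F_rep; have [Xphi _ tail_cvg] := F_rep.
have cost_ge0 : 0 <= rep_cost a phi.
  by apply: le_trans (fcost_le_rep_cost 0 F_rep); rewrite /fcost /mkseq big_nil.
apply/ler_addgt0Pr => e e_gt0; have [N _ tailN] := cvgr_dist_le _ _ tail_cvg _ e_gt0.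
have := tailN N (leqnn N); rewrite sub0r normrN => tail_le.
set s := mkseq (fun i => (a i, phi i)) N.
have Xs : X_terms s by exact: X_terms_mkseq.
have tail_dual : in_dualBA mul X (F - fsum s).
  exact: dualBAB F_dual (fsum_dual Xs).
apply: dMnorm_le => [|T T_BA]; first exact: addr_ge0 cost_ge0 (ltW e_gt0).
have -> : F T = fsum s T + (F T - fsum s T) by rewrite addrC subrK.
rewrite mulrDl; apply: le_trans (nrmCD _ _) (lerD _ _).
- apply: le_trans (fsum_bound Xs T_BA) _.
  exact: ler_wpM2r (Mnorm_ge0 T_BA) _ _ (fcost_le_rep_cost N F_rep).
- apply: le_trans (dMnorm_bound tail_dual T_BA) _.
  rewrite ler_wpM2r ?Mnorm_ge0 //; apply: le_trans tail_le; apply: le_trans (ler_norm _).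
  suff -> : F - fsum s = fun T => F T - \sum_(0 <= i < N) elem (a i) (phi i) T by [].
  by apply/funext => S; rewrite -fsum_mkseq.
Qed.

Lemma X_terms_cat_blocks (b : nat -> seq (A * (A -> C))) n :
  (forall k, X_terms (b k)) -> X_terms (cat_blocks b n).
Proof.
move=> Xb; elim: n => [|n IHn]; first by move=> t; rewrite inE.
by rewrite cat_blocksS; apply/X_terms_cat.
Qed.

Section RepresentationFromBlocks.
Variables (F : AX -> C) (b : nat -> seq (A * (A -> C))) (B : R) (rho : nat -> R).
Hypotheses (F_dual : in_dualBA mul X F) (Xb : forall n, X_terms (b n)) (b_nonempty : forall n, (0 < size (b n))%N).
Hypotheses (cost_le : forall n, fcost (cat_blocks b n) <= B)
  (cost_tail : forall m n, (m < n)%N ->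
     fcost (cat_blocks b n) <= fcost (cat_blocks b m.+1) + rho m)
  (rho_cvg : rho @ \oo --> 0)
  (approx : forall m T, BA T ->
     nrmC (F T - fsum (cat_blocks b m.+1) T) <= rho m * Mnorm X T).

Let u := nth_blocks (0, 0) b.
Let a k := (u k).1.
Let phi k := (u k).2.

Let prefixE N : mkseq (fun i => (a i, phi i)) N = take N (cat_blocks b N).
Proof.
rewrite (take_cat_blocks (0, 0) b_nonempty); last exact: size_cat_blocks.
by apply: eq_mkseq => i; rewrite /a /phi -surjective_pairing.
Qed.

Let X_phi k : X (phi k).
Proof.
rewrite /phi; apply: (X_terms_cat_blocks (n := k.+1) Xb); rewrite /u /nth_blocks mem_nth //.
exact: size_cat_blocks.
Qed.

Let series_le N : series (fun i => nrmA (a i) * dnorm (phi i)) N <= B.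
Proof.
rewrite -fcost_mkseq prefixE; apply: le_trans (cost_le N).
exact/fcost_take/X_terms_cat_blocks.
Qed.

Lemma is_rep_cat_blocks : is_rep mul X F a phi /\ rep_cost a phi <= B.
Proof.
have cost_cvg : cvgn (series (fun i => nrmA (a i) * dnorm (phi i))).
  apply: nondecreasing_is_cvgn; first exact: nondecreasing_series_cost.
  by exists B => _ [N _ <-]; exact: series_le.
split; last by apply: limr_le => //; apply: nearW; exact: series_le.
split=> //; apply/cvgrPdist_le => e e_gt0.
have [m _ rho_m] := cvgr_dist_le _ _ rho_cvg _ (divr_gt0 e_gt0 (ltr0n _ 2)).
have := rho_m m (leqnn m); rewrite sub0r normrN => /(le_trans (ler_norm _)) rho_le.
have rho_ge0 : 0 <= rho m by have := cost_tail (ltnSn m); rewrite lerDl.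
exists (size (cat_blocks b m.+1)) => // N N_ge; rewrite sub0r normrN.
have m_lt_N : (m < N)%N by exact: leq_trans (size_cat_blocks b_nonempty m.+1) N_ge.
have [r rE] := cat_blocks_prefix b (m_lt_N : (m.+1 <= N)%N).
set r' := take (N - size (cat_blocks b m.+1)) r.
have prefixE' : mkseq (fun i => (a i, phi i)) N = cat_blocks b m.+1 ++ r'.
  by rewrite prefixE rE take_cat ltnNge N_ge /=.
have Xr : X_terms r by have := X_terms_cat_blocks (n := N) Xb; rewrite rE => /X_terms_cat[].
have Xr' : X_terms r' by exact: X_terms_take.
have cost_r' : fcost r' <= rho m.
  apply: le_trans (fcost_take _ Xr) _; have := cost_tail m_lt_N.
  by rewrite rE fcost_cat lerD2l.
have sum_dual : in_dualBA mul X (fun T => F T - \sum_(0 <= i < N) elem (a i) (phi i) T).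
  suff -> : (fun T => F T - \sum_(0 <= i < N) elem (a i) (phi i) T) =
    (fun T => F T - fsum (mkseq (fun i => (a i, phi i)) N) T) by exact/dualBAB/fsum_dual/X_terms_mkseq.
  by apply/funext => T; rewrite -fsum_mkseq.
rewrite ger0_norm ?(dMnorm_ge0 sum_dual) //.
apply: le_trans (_ : dMnorm mul X _ <= rho m + rho m) _; last by lra.
apply: dMnorm_le => [|T T_BA]; first by rewrite addr_ge0.
rewrite -fsum_mkseq prefixE' fsum_cat opprD addrA mulrDl.
apply: le_trans (nrmCD _ _) (lerD (approx m T_BA) _).
rewrite nrmCN; apply: le_trans (fsum_bound Xr' T_BA) _.
by rewrite ler_wpM2r ?Mnorm_ge0.
Qed.

End RepresentationFromBlocks.

Lemma represents_near_dMnorm s eps : X_terms s -> 0 < eps ->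
  exists t, represents t (fsum s) /\ fcost t <= dMnorm mul X (fsum s) + eps.
Proof.
move=> Xs eps_gt0; have [|_ [t ts <-] t_lt] := @inf_adherent _ [set fcost t | t in represents ^~ (fsum s)] _ eps_gt0.
  split; first by exists (fcost s), s.
  by exists 0 => _ [t [Xt _] <-]; exact: fcost_ge0.
exists t; split=> //; apply/ltW/(lt_le_trans t_lt).
by rewrite lerD2r; exact: pnorm_fsum_le_dMnorm.
Qed.

Section RepresentationOfLimit.
Variables (F : AX -> C) (e : R).
Hypotheses (F_dual : in_dualBA mul X F) (e_gt0 : 0 < e).
Hypothesis F_approx : forall eps, 0 < eps ->
  exists2 s, X_terms s & dMnorm mul X (fun T => F T - fsum s T) <= eps.

Let rho : nat -> R := geometric (e * 2 / 3) 2^-1.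
Let g n := rho n / 4.
Let g_gt0 n : 0 < g n.
Proof. by rewrite /g /rho /geometric /= !divr_gt0 ?mulr_gt0 ?exprn_gt0. Qed.
Let gS n : g n.+1 = g n / 2.
Proof. by rewrite /g /rho /geometric /= exprS; field. Qed.
Let g0 : g 0 = e / 6.
Proof. by rewrite /g /rho /geometric /= expr0 mulr1; field. Qed.

Lemma exists_rep_near_dMnorm : exists (a : nat -> A) (phi : nat -> A -> C),
  is_rep mul X F a phi /\ rep_cost a phi <= dMnorm mul X F + e.
Proof.
have /choice[sl /all_and2[Xsl sl_le]] : forall n, exists s, X_terms s /\
    dMnorm mul X (fun T => F T - fsum s T) <= g n.
  by move=> n; have [s Xs s_le] := F_approx (g_gt0 n); exists s.
pose D n T := F T - fsum (sl n) T.
have D_dual n : in_dualBA mul X (D n) by exact: dualBAB F_dual (fsum_dual (Xsl n)).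
pose d n := if n is m.+1 then sl m.+1 ++ scale_terms (-1) (sl m) else sl 0.
have Xd n : X_terms (d n).
  case: n => [|m]; rewrite /d; first exact: Xsl.
  by apply/X_terms_cat; split; [exact: Xsl|exact: X_terms_scale (Xsl m)].
have fsum_d m T : BA T -> fsum (d m.+1) T = D m T - D m.+1 T.
  by move=> T_BA; rewrite /d fsum_cat (fsum_scale _ (Xsl m) T_BA) /D; ring.
have d0_le : dMnorm mul X (fsum (d 0)) <= dMnorm mul X F + g 0.
  apply: le_trans (dMnorm_le_sub F_dual (D_dual 0) _) _ => [T _|].
    by rewrite /D opprB addrC subrK.
  by rewrite lerD2l; exact: sl_le.
have dS_le m : dMnorm mul X (fsum (d m.+1)) <= g m + g m.+1.
  apply: le_trans (dMnorm_le_sub (D_dual m) (D_dual m.+1) (fsum_d m)) _.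
  exact: lerD (sl_le m) (sl_le m.+1).
have /choice[tl tlP] : forall n, exists t, represents t (fsum (d n)) /\
    fcost t <= dMnorm mul X (fsum (d n)) + g n.
  by move=> n; exact: represents_near_dMnorm (Xd n) (g_gt0 n).
pose b n := (0, 0) :: tl n.
have Xb n : X_terms (b n).
  by move=> t; rewrite inE => /orP[/eqP -> /=|]; [exact: X0|exact: (tlP n).1.1].
have fsum_b n T : BA T -> fsum (b n) T = fsum (d n) T.
  move=> T_BA; rewrite /fsum big_cons /= -(scale0r (0 : A)) (BAZr _ _ T_BA X0).
  by rewrite mul0r add0r [RHS](tlP n).1.2.
have cost_b n : fcost (b n) <= dMnorm mul X (fsum (d n)) + g n.
  by rewrite /fcost big_cons /= nrmA0 mul0r add0r; exact: (tlP n).2.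
have fsum_cat_blocks n T : BA T -> fsum (cat_blocks b n.+1) T = fsum (sl n) T.
  move=> T_BA; elim: n => [|n IHn]; rewrite cat_blocksS fsum_cat fsum_b //.
    by rewrite /fsum big_nil add0r.
  by rewrite IHn fsum_d // /D; ring.
have cost_tail m k : fcost (cat_blocks b (m.+1 + k)) <= fcost (cat_blocks b m.+1) + 4 * (g m - g (m + k)).
  elim: k => [|k IHk]; first by rewrite !addn0 subrr mulr0 addr0.
  rewrite addnS cat_blocksS fcost_cat.
  have := cost_b (m + k).+1; have := dS_le (m + k); have := gS (m + k); have := g_gt0 (m + k).+1.
  rewrite addnS; lra.
have rhoE m : rho m = 4 * g m by rewrite /g mulrC divfK.
have cost_le n : fcost (cat_blocks b n) <= dMnorm mul X F + e.
  case: n => [|k]; first by rewrite /fcost big_nil addr_ge0 ?dMnorm_ge0 ?ltW.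
  have := cost_tail 0 k; rewrite add1n add0n (_ : cat_blocks b 1 = b 0); last by rewrite /cat_blocks /= cats0.
  have := cost_b 0; have := g_gt0 k; rewrite g0 in d0_le *; lra.
have cost_tail' m n : (m < n)%N -> fcost (cat_blocks b n) <= fcost (cat_blocks b m.+1) + rho m.
  move=> /subnKC <-; apply: le_trans (cost_tail m _) _.
  by rewrite lerD2l rhoE ler_wpM2l // gerBl ltW.
have approx m T : BA T -> nrmC (F T - fsum (cat_blocks b m.+1) T) <= rho m * Mnorm X T.
  move=> T_BA; rewrite fsum_cat_blocks //; apply: le_trans (dMnorm_bound (D_dual m) T_BA) _.
  rewrite ler_wpM2r ?Mnorm_ge0 // rhoE; apply: le_trans (sl_le m) _.
  by have := g_gt0 m; lra.
have rho_cvg : rho @ \oo --> 0 by apply: cvg_geometric; rewrite gtr0_norm ?invf_lt1 ?ltr1n.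
have [rep cost] := is_rep_cat_blocks F_dual Xb (fun n => isT) cost_le cost_tail' rho_cvg approx.
by do 2 eexists; split; [exact: rep|exact: cost].
Qed.

End RepresentationOfLimit.

Lemma in_QX_approx F : in_QX mul X F -> forall eps, 0 < eps ->
  exists2 s, X_terms s & dMnorm mul X (fun T => F T - fsum s T) <= eps.
Proof.
move=> [_ F_close] eps eps_gt0; have [G [n [a [phi [Xphi ->]]]] G_le] := F_close _ eps_gt0.
exists [seq (a i, phi i) | i <- index_enum 'I_n]; first by move=> _ /mapP[i _ ->]; exact: Xphi.
by under eq_fun do rewrite /fsum big_map; exact: G_le.
Qed.

Lemma in_QX_rep F (a : nat -> A) (phi : nat -> A -> C) :
  in_dualBA mul X F -> is_rep mul X F a phi -> in_QX mul X F.
Proof.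
move=> F_dual [Xphi _ tail_cvg]; split=> // eps eps_gt0.
have [N _ tailN] := cvgr_dist_le _ _ tail_cvg _ eps_gt0.
exists (fun T => \sum_(i < N) elem (a i) (phi i) T).
  by exists N, (fun i => a i), (fun i => phi i).
have := tailN N (leqnn N); rewrite sub0r normrN; apply: le_trans.
suff -> : (fun T => F T - \sum_(i < N) elem (a i) (phi i) T) =
    (fun T => F T - \sum_(0 <= i < N) elem (a i) (phi i) T) by exact: ler_norm.
by apply/funext => T; rewrite big_mkord.
Qed.

Lemma dMnorm_eq_inf_rep_cost F : in_dualBA mul X F -> in_QX mul X F ->
  dMnorm mul X F = inf [set r | exists (a : nat -> A) (phi : nat -> A -> C),
                                 is_rep mul X F a phi /\ r = rep_cost a phi].
Proof.
move=> F_dual F_Q; have F_approx := in_QX_approx F_Q.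
apply/eqP; rewrite eq_le; apply/andP; split.
  apply: lb_le_inf => [|_ [a [phi [F_rep ->]]]]; last exact: dMnorm_le_rep_cost.
  have [a [phi [F_rep _]]] := exists_rep_near_dMnorm F_dual ltr01 F_approx.
  by exists (rep_cost a phi), a, phi.
apply/ler_addgt0Pr => e e_gt0.
have [a [phi [F_rep cost_le]]] := exists_rep_near_dMnorm F_dual e_gt0 F_approx.
apply: le_trans cost_le; apply: ge_inf; last by exists a, phi.
exists 0 => _ [a' [phi' [F_rep' ->]]].
by apply: le_trans (fcost_le_rep_cost 0 F_rep'); rewrite /fcost /mkseq big_nil.
Qed.

End BanachModule.


Theorem mainTheorem2 (R : realType) (A : completeNormedModType R[i])
  (mul : A -> A -> A) (X : set (A -> R[i]))
  (F : (A -> (A -> R[i]) -> R[i]) -> R[i]) :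
  banach_algebra_mul mul ->
  closed_left_submodule mul X ->
  in_dualBA mul X F ->
  (in_QX mul X F <->
     exists (a : nat -> A) (phi : nat -> A -> R[i]), is_rep mul X F a phi) /\
  (in_QX mul X F ->
     dMnorm mul X F =
       inf [set s | exists (a : nat -> A) (phi : nat -> A -> R[i]),
                      is_rep mul X F a phi /\ s = rep_cost a phi]).
Proof.
move=> _ X_sub F_dual; split; last exact: dMnorm_eq_inf_rep_cost.
split=> [F_Q|[a [phi F_rep]]]; last exact: in_QX_rep F_rep.
have [a [phi [F_rep _]]] := exists_rep_near_dMnorm X_sub F_dual ltr01 (in_QX_approx F_Q).
by exists a, phi.
Qed.
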